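(* There is a computable Friedberg enumeration $(\mathcal{G}_n)_{n\in\omega}$ of $FUG$ such that whenever $\mathcal{G}\cong\mathcal{G}_m$ and $\mathcal{G}'\cong\mathcal{G}_n$, where $\mathcal{G}'$ is a proper extension of $\mathcal{G}$ (i.e. $\mathcal{G}\subsetneq\mathcal{G}'$ as substructures), we have $m<n$.
   Context: $FUG$ is the class of finite undirected graphs (language $\{E\}$, $E$ irreflexive and symmetric) with universe a subset of $\omega$, closed under isomorphism. $D(\mathcal{A})$ is the atomic diagram of $\mathcal{A}$ (atomic sentences and their negations true in $\mathcal{A}$, elements used as constants, identified with Gödel numbers). A computable enumeration of a class $K$ is a c.e. set $\mathcal{E}$ of pairs $(n,\varphi)$, $n\in\omega$, $\varphi$ an atomic sentence or negation of one, such that (a) for each $n$, $\{\varphi:(n,\varphi)\in\mathcal{E}\}=D(\mathcal{A}_n)$ for some $\mathcal{A}_n\in K$, and (b) every $\mathcal{A}\in K$ is isomorphic to some $\mathcal{A}_n$; it is written $(\mathcal{A}_n)_{n\in\omega}$. It is Friedberg if each isomorphism type in $K$ is represented by exactly one $n$. *)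

From Stdlib Require Import Arith List Cantor.
Import ListNotations.

Definition pair (a b : nat) : nat := Cantor.to_nat (a, b).
Definition unpair (n : nat) : nat * nat := Cantor.of_nat n.

Inductive prf : Type :=
| PZero : prf
| PSucc : prf
| PFst  : prf
| PSnd  : prf
| PPair : prf -> prf -> prf
| PComp : prf -> prf -> prf
| PRec  : prf -> prf -> prf
| PMu   : prf -> prf.

Inductive evalR : prf -> nat -> nat -> Prop :=
| eZero x : evalR PZero x 0
| eSucc x : evalR PSucc x (S x)
| eFst x : evalR PFst x (fst (unpair x))
| eSnd x : evalR PSnd x (snd (unpair x))
| ePair f g x a b : evalR f x a -> evalR g x b -> evalR (PPair f g) x (pair a b)
| eComp f g x z y : evalR g x z -> evalR f z y -> evalR (PComp f g) x y
| eRec0 g h a y : evalR g a y -> evalR (PRec g h) (pair a 0) y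
| eRecS g h a n z y :
    evalR (PRec g h) (pair a n) z -> evalR h (pair a (pair n z)) y ->
    evalR (PRec g h) (pair a (S n)) y
| eMu f x n :
    evalR f (pair x n) 0 ->
    (forall k, k < n -> exists v, v <> 0 /\ evalR f (pair x k) v) ->
    evalR (PMu f) x n.

Definition ce (W : nat -> Prop) : Prop :=
  exists f : prf, forall x, W x <-> exists y, evalR f x y.

Record graph : Type := mkGraph { verts : list nat ; edge : nat -> nat -> bool }.

Definition in_graph (G : graph) (a : nat) : Prop := In a (verts G).

Definition is_fug (G : graph) : Prop :=
  verts G <> [] /\
  (forall a, in_graph G a -> edge G a a = false) /\
  (forall a b, in_graph G a -> in_graph G b -> edge G a b = edge G b a).

(* Isomorphism of graphs (only the universe and E restricted to it matter). *)
Definition graph_iso (G H : graph) : Prop :=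
  exists f : nat -> nat,
    (forall a, in_graph G a -> in_graph H (f a)) /\
    (forall a b, in_graph G a -> in_graph G b -> f a = f b -> a = b) /\
    (forall c, in_graph H c -> exists a, in_graph G a /\ f a = c) /\
    (forall a b, in_graph G a -> in_graph G b -> edge H (f a) (f b) = edge G a b).

(* G is a substructure of G' (relational language: induced subgraph). *)
Definition substructure (G G' : graph) : Prop :=
  (forall a, in_graph G a -> in_graph G' a) /\
  (forall a b, in_graph G a -> in_graph G b -> edge G a b = edge G' a b).

Definition proper_ext (G G' : graph) : Prop :=
  substructure G G' /\ exists a, in_graph G' a /\ ~ in_graph G a.

Inductive atom : Type :=
| AEq : nat -> nat -> atom
| AE  : nat -> nat -> atom.

Inductive literal : Type :=
| LPos : atom -> literal
| LNeg : atom -> literal.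

Definition code_atom (t : atom) : nat :=
  match t with AEq a b => pair 0 (pair a b) | AE a b => pair 1 (pair a b) end.
Definition code_lit (l : literal) : nat :=
  match l with LPos t => pair 0 (code_atom t) | LNeg t => pair 1 (code_atom t) end.

(* Truth of an atomic sentence (constants = elements of the universe). *)
Definition holds_atom (G : graph) (t : atom) : Prop :=
  match t with AEq a b => a = b | AE a b => edge G a b = true end.

Definition in_diagram (G : graph) (l : literal) : Prop :=
  match l with
  | LPos t => (match t with AEq a b | AE a b => in_graph G a /\ in_graph G b end)
              /\ holds_atom G t
  | LNeg t => (match t with AEq a b | AE a b => in_graph G a /\ in_graph G b end)
              /\ ~ holds_atom G t
  end.

Definition comp_enum_FUG (W : nat -> Prop) (Gs : nat -> graph) : Prop :=
  ce W /\
  (forall x, W x -> exists n l, x = pair n (code_lit l)) /\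
  (forall n, is_fug (Gs n) /\
             forall l, W (pair n (code_lit l)) <-> in_diagram (Gs n) l) /\
  (forall G, is_fug G -> exists n, graph_iso G (Gs n)).

Definition friedberg (Gs : nat -> graph) : Prop :=
  forall m n, graph_iso (Gs m) (Gs n) -> m = n.

(* A graph with k vertices is coded, up to isomorphism, by a number
   e < code_limit k that codes its adjacency matrix on the vertices 0..k-1.
   Isomorphism of coded graphs is decidable by a bounded search for a coded
   bijection, so a code can be called canonical when no smaller code describes
   an isomorphic graph.  Listing the pairs <k, e> with e canonical for size k
   in lexicographic order (size first, then code) gives a computable
   enumeration containing every isomorphism type exactly once.  Sizes never
   decrease along it, and a proper extension has strictly more vertices, hence
   a strictly larger index. *)
From Stdlib Require Import Arith List Cantor Lia Bool.
Import ListNotations.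

Definition p1 (x : nat) : nat := fst (unpair x).
Definition p2 (x : nat) : nat := snd (unpair x).

Lemma p1_pair a b : p1 (pair a b) = a.
Proof. unfold p1, unpair, pair. now rewrite cancel_of_to. Qed.
Lemma p2_pair a b : p2 (pair a b) = b.
Proof. unfold p2, unpair, pair. now rewrite cancel_of_to. Qed.
Lemma pair_p x : pair (p1 x) (p2 x) = x.
Proof. unfold p1, p2, unpair, pair. rewrite <- surjective_pairing. apply cancel_to_of. Qed.

Lemma pair_le a b a' b' : a <= a' -> b <= b' -> pair a b <= pair a' b'.
Proof.
  intros Ha Hb. pose proof (to_nat_spec a b). pose proof (to_nat_spec a' b').
  unfold pair. nia.
Qed.
Lemma pair_lt_square a b k : a < k -> b < k -> pair a b < pair k k.
Proof.
  intros Ha Hb. pose proof (to_nat_spec a b). pose proof (to_nat_spec k k).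
  unfold pair. nia.
Qed.

Lemma pair_inj a b c d : pair a b = pair c d -> a = c /\ b = d.
Proof.
  intro E. split; [apply (f_equal p1) in E | apply (f_equal p2) in E];
    now rewrite ?p1_pair, ?p2_pair in E.
Qed.

(* Programs compute partial functions: each input has at most one output.
   This is what lets a [PMu] search read off the value of a subprogram. *)
Definition functional (f : prf) : Prop :=
  forall x y1 y2, evalR f x y1 -> evalR f x y2 -> y1 = y2.

Lemma evalR_rec_inv g h a n y : evalR (PRec g h) (pair a n) y ->
  match n with
  | 0 => evalR g a y
  | S m => exists z, evalR (PRec g h) (pair a m) z /\ evalR h (pair a (pair m z)) y
  end.
Proof.
  intro H. inversion H; subst;
    match goal with E : pair _ _ = pair _ _ |- _ => apply pair_inj in E as [<- <-] end;
    eauto.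
Qed.

Lemma rec_functional g h : functional g -> functional h -> functional (PRec g h).
Proof.
  intros Fg Fh x y1 y2 H1.
  assert (Hn : forall n a y1 y2, evalR (PRec g h) (pair a n) y1 ->
                 evalR (PRec g h) (pair a n) y2 -> y1 = y2).
  { induction n as [|n IH]; intros a z1 z2 A B;
      apply evalR_rec_inv in A; apply evalR_rec_inv in B; simpl in A, B.
    - eapply Fg; eauto.
    - destruct A as [u [Au Bu]], B as [v [Av Bv]].
      assert (u = v) by eauto. subst. eapply Fh; eauto. }
  inversion H1; subst; eapply Hn; eauto.
Qed.

Lemma mu_functional f : functional f -> functional (PMu f).
Proof.
  intros Ff x y1 y2 H1 H2. inversion H1 as [| | | | | | | |? ? ? Z1 B1]; subst.
  inversion H2 as [| | | | | | | |? ? ? Z2 B2]; subst.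
  destruct (Nat.lt_trichotomy y1 y2) as [L|[L|L]]; auto; exfalso.
  - destruct (B2 y1 L) as [v [Hv Ev]]. apply Hv. eapply Ff; eauto.
  - destruct (B1 y2 L) as [v [Hv Ev]]. apply Hv. eapply Ff; eauto.
Qed.

Lemma evalR_functional f : functional f.
Proof.
  induction f as [| | | |f IHf g IHg|f IHf g IHg|g IHg h IHh|f IHf];
    auto using rec_functional, mu_functional;
    intros x y1 y2 H1 H2; inversion H1; inversion H2; subst; auto.
  - f_equal; eauto.
  - match goal with A : evalR g x ?z1, B : evalR g x ?z2 |- _ =>
      assert (z1 = z2) by eauto end; subst; eauto.
Qed.

Definition computable (F : nat -> nat) : Prop := exists f, forall x, evalR f x (F x).
Definition computableb (P : nat -> bool) : Prop := computable (fun x => Nat.b2n (P x)).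

Lemma computable_ext F G : computable F -> (forall x, F x = G x) -> computable G.
Proof. intros [f Hf] E. exists f. intro x. rewrite <- E. auto. Qed.

Lemma computable_id : computable (fun x => x).
Proof. exists (PPair PFst PSnd). intro x. rewrite <- (pair_p x) at 2. constructor; constructor. Qed.

Lemma computable_comp F G : computable F -> computable G -> computable (fun x => F (G x)).
Proof. intros [f Hf] [g Hg]. exists (PComp f g). intro x. econstructor; eauto. Qed.

Lemma computable_pair F G :
  computable F -> computable G -> computable (fun x => pair (F x) (G x)).
Proof. intros [f Hf] [g Hg]. exists (PPair f g). intro x. econstructor; eauto. Qed.

Lemma computable_p1 F : computable F -> computable (fun x => p1 (F x)).
Proof. apply (computable_comp p1). exists PFst. constructor. Qed.
Lemma computable_p2 F : computable F -> computable (fun x => p2 (F x)).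
Proof. apply (computable_comp p2). exists PSnd. constructor. Qed.
Lemma computable_S F : computable F -> computable (fun x => S (F x)).
Proof. apply (computable_comp S). exists PSucc. constructor. Qed.
Lemma computable_const c : computable (fun _ => c).
Proof.
  induction c as [|c IH]; [exists PZero; constructor|].
  exact (computable_S (fun _ => c) IH).
Qed.

Fixpoint nrec (i : nat) (b : nat -> nat -> nat) (n : nat) : nat :=
  match n with 0 => i | S n => b n (nrec i b n) end.

(* The program [PRec] realises [nrec]; parameters are passed as the first
   component of the argument. *)
Lemma computable_nrec I B N : computable N -> computable I ->
  computable (fun p => B (p1 p) (p1 (p2 p)) (p2 (p2 p))) ->
  computable (fun x => nrec (I x) (B x) (N x)).
Proof.
  intros HN [g Hg] [h Hh].
  assert (HR : computable (fun q => nrec (I (p1 q)) (B (p1 q)) (p2 q))).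
  { exists (PRec g h). intro q. rewrite <- (pair_p q), p1_pair, p2_pair.
    induction (p2 q) as [|n IH]; [now constructor|].
    econstructor; [exact IH|].
    specialize (Hh (pair (p1 q) (pair n (nrec (I (p1 q)) (B (p1 q)) n)))).
    now rewrite !p1_pair, !p2_pair, !p1_pair in Hh. }
  eapply computable_ext.
  - apply (computable_comp _ (fun x => pair x (N x)) HR), computable_pair; auto.
    apply computable_id.
  - intro x. cbv beta. now rewrite p1_pair, p2_pair.
Qed.

Definition computable2 (op : nat -> nat -> nat) : Prop :=
  computable (fun p => op (p1 p) (p2 p)).
Definition computable3 (op : nat -> nat -> nat -> nat) : Prop :=
  computable (fun p => op (p1 p) (p1 (p2 p)) (p2 (p2 p))).

Lemma computable_bin op F G : computable2 op -> computable F -> computable G ->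
  computable (fun x => op (F x) (G x)).
Proof.
  intros H HF HG. eapply computable_ext.
  - exact (computable_comp _ _ H (computable_pair F G HF HG)).
  - intro x. cbv beta. now rewrite p1_pair, p2_pair.
Qed.

Lemma computable_tern op F G H : computable3 op -> computable F -> computable G ->
  computable H -> computable (fun x => op (F x) (G x) (H x)).
Proof.
  intros Hop HF HG HH. eapply computable_ext.
  - apply (computable_comp _ (fun x => pair (F x) (pair (G x) (H x))) Hop).
    repeat apply computable_pair; auto.
  - intro x. cbv beta. now rewrite !p1_pair, !p2_pair, p1_pair.
Qed.

Lemma computable2_add : computable2 Nat.add.
Proof.
  eapply computable_ext.
  - apply (computable_nrec p1 (fun _ _ acc => S acc) p2).
    + apply computable_p2, computable_id.
    + apply computable_p1, computable_id.
    + apply computable_S, computable_p2, computable_p2, computable_id.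
  - intro x. cbv beta. induction (p2 x); simpl; lia.
Qed.

Lemma computable_add F G : computable F -> computable G -> computable (fun x => F x + G x).
Proof. apply computable_bin, computable2_add. Qed.

Lemma computable2_mul : computable2 Nat.mul.
Proof.
  eapply computable_ext.
  - apply (computable_nrec (fun _ => 0) (fun p _ acc => acc + p1 p) p2).
    + apply computable_p2, computable_id.
    + apply computable_const.
    + apply computable_add.
      * apply computable_p2, computable_p2, computable_id.
      * apply computable_p1, computable_p1, computable_id.
  - intro x. cbv beta. induction (p2 x); simpl; lia.
Qed.

Lemma computable_pred : computable Nat.pred.
Proof.
  eapply computable_ext.
  - apply (computable_nrec (fun _ => 0) (fun _ n _ => n) (fun p => p)).
    + apply computable_id.
    + apply computable_const.
    + apply computable_p1, computable_p2, computable_id.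
  - now intros [|x].
Qed.

Lemma computable2_sub : computable2 Nat.sub.
Proof.
  eapply computable_ext.
  - apply (computable_nrec p1 (fun _ _ acc => Nat.pred acc) p2).
    + apply computable_p2, computable_id.
    + apply computable_p1, computable_id.
    + apply (computable_comp Nat.pred), computable_p2, computable_p2, computable_id.
      apply computable_pred.
  - intro x. cbv beta. generalize (p1 x).
    induction (p2 x) as [|n IH]; intro a; simpl; [lia|]. rewrite IH. lia.
Qed.

Lemma computable_mul F G : computable F -> computable G -> computable (fun x => F x * G x).
Proof. apply computable_bin, computable2_mul. Qed.
Lemma computable_sub F G : computable F -> computable G -> computable (fun x => F x - G x).
Proof. apply computable_bin, computable2_sub. Qed.

Lemma computableb_eqb F G : computable F -> computable G -> computableb (fun x => F x =? G x).
Proof.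
  intros. eapply computable_ext with (F := fun x => 1 - ((F x - G x) + (G x - F x))).
  - apply computable_sub; [apply computable_const|]. apply computable_add; apply computable_sub; auto.
  - intro x. destruct (Nat.eqb_spec (F x) (G x)); simpl Nat.b2n; lia.
Qed.
Lemma computableb_ltb F G : computable F -> computable G -> computableb (fun x => F x <? G x).
Proof.
  intros. eapply computable_ext with (F := fun x => 1 - (S (F x) - G x)).
  - apply computable_sub; [apply computable_const|].
    apply computable_sub; [apply computable_S|]; auto.
  - intro x. destruct (Nat.ltb_spec (F x) (G x)); simpl Nat.b2n; lia.
Qed.
Lemma computableb_andb F G : computableb F -> computableb G -> computableb (fun x => F x && G x).
Proof.
  intros. eapply computable_ext with (F := fun x => Nat.b2n (F x) * Nat.b2n (G x)).
  - now apply computable_mul.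
  - intro x. now destruct (F x), (G x).
Qed.
Lemma computableb_negb F : computableb F -> computableb (fun x => negb (F x)).
Proof.
  intros. eapply computable_ext with (F := fun x => 1 - Nat.b2n (F x)).
  - apply computable_sub; auto using computable_const.
  - intro x. now destruct (F x).
Qed.
Lemma computableb_orb F G : computableb F -> computableb G -> computableb (fun x => F x || G x).
Proof.
  intros. eapply computable_ext with (F := fun x => Nat.b2n (negb (negb (F x) && negb (G x)))).
  - apply (computableb_negb (fun x => negb (F x) && negb (G x))).
    apply computableb_andb; now apply computableb_negb.
  - intro x. now destruct (F x), (G x).
Qed.
Lemma computableb_beq F G : computableb F -> computableb G ->
  computableb (fun x => Bool.eqb (F x) (G x)).
Proof.
  intros. eapply computable_ext.
  - apply (computableb_eqb (fun x => Nat.b2n (F x)) (fun x => Nat.b2n (G x))); auto.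
  - intro x. cbv beta. now destruct (F x), (G x).
Qed.
Lemma computable_if C A B : computableb C -> computable A -> computable B ->
  computable (fun x => if C x then A x else B x).
Proof.
  intros. eapply computable_ext with (F := fun x => A x * Nat.b2n (C x) + B x * (1 - Nat.b2n (C x))).
  - apply computable_add; apply computable_mul; auto.
    apply computable_sub; auto using computable_const.
  - intro x. destruct (C x); simpl; lia.
Qed.
Lemma computableb_if C A B : computableb C -> computableb A -> computableb B ->
  computableb (fun x => if C x then A x else B x).
Proof.
  intros. eapply computable_ext.
  - apply (computable_if C (fun x => Nat.b2n (A x)) (fun x => Nat.b2n (B x))); auto.
  - intro x. cbv beta. now destruct (C x).
Qed.

(* A decidable set is c.e.: search with [PMu] for a witness that exists
   exactly when the decision procedure accepts. *)
Lemma ce_decidable (P : nat -> bool) : computableb P -> ce (fun x => P x = true).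
Proof.
  intro HP.
  destruct (computableb_negb P HP) as [g Hg].
  exists (PMu (PComp g PFst)). intro x. split.
  - intro H. exists 0. constructor; [|intros; lia].
    econstructor; [apply eFst|]. fold (p1 (pair x 0)). rewrite p1_pair.
    specialize (Hg x). now rewrite H in Hg.
  - intros [y Hy]. inversion Hy as [| | | | | | | |? ? ? Hc _]; subst.
    inversion Hc as [| | | | |? ? ? ? ? Hf Hz| | |]; subst.
    inversion Hf; subst. fold (p1 (pair x y)) in Hz. rewrite p1_pair in Hz.
    pose proof (evalR_functional _ _ _ _ Hz (Hg x)) as E.
    destruct (P x); [reflexivity | discriminate].
Qed.

(* [solve_computable] proves [computable F] / [computableb P] by following the
   syntax of [F]; functions it does not know are looked up in the hint
   database [computable_db], in their [computable2]/[computable3] form.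
   [solve_computable_ext] is an extension point for the bounded quantifiers
   introduced below. *)
Create HintDb computable_db.
Ltac solve_computable_ext := fail.

Ltac solve_computable :=
  cbv beta zeta;
  first [ assumption | apply computable_const | solve_computable_syntax ]
with solve_computable_syntax :=
  lazymatch goal with
  | |- computableb _ => unfold computableb; solve_computable
  | |- computable (fun x => x) => apply computable_id
  | |- computable (fun x => Nat.b2n (@?A x =? @?B x)) =>
      apply (computableb_eqb A B); solve_computable
  | |- computable (fun x => Nat.b2n (@?A x <? @?B x)) =>
      apply (computableb_ltb A B); solve_computable
  | |- computable (fun x => Nat.b2n (@?A x && @?B x)) =>
      apply (computableb_andb A B); solve_computable
  | |- computable (fun x => Nat.b2n (@?A x || @?B x)) =>
      apply (computableb_orb A B); solve_computable
  | |- computable (fun x => Nat.b2n (negb (@?A x))) =>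
      apply (computableb_negb A); solve_computable
  | |- computable (fun x => Nat.b2n (Bool.eqb (@?A x) (@?B x))) =>
      apply (computableb_beq A B); solve_computable
  | |- computable (fun x => Nat.b2n (if @?C x then @?A x else @?B x)) =>
      apply (computableb_if C A B); solve_computable
  | |- computable (fun x => S (@?A x)) => apply (computable_S A); solve_computable
  | |- computable (fun x => p1 (@?A x)) => apply (computable_p1 A); solve_computable
  | |- computable (fun x => p2 (@?A x)) => apply (computable_p2 A); solve_computable
  | |- computable (fun x => pair (@?A x) (@?B x)) =>
      apply (computable_pair A B); solve_computable
  | |- computable (fun x => @?A x + @?B x) => apply (computable_add A B); solve_computable
  | |- computable (fun x => @?A x * @?B x) => apply (computable_mul A B); solve_computable
  | |- computable (fun x => @?A x - @?B x) => apply (computable_sub A B); solve_computable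
  | |- computable (fun x => if @?C x then @?A x else @?B x) =>
      apply (computable_if C A B); solve_computable
  | |- computable (fun x => nrec (@?I x) (@?B x) (@?N x)) =>
      apply (computable_nrec I B N); solve_computable
  | _ => first [ solve_computable_ext | solve_computable_hint ]
  end
with solve_computable_hint :=
  lazymatch goal with
  | |- computable (fun x => Nat.b2n (?f (@?A x) (@?B x) (@?C x))) =>
      apply (computable_tern (fun a b c => Nat.b2n (f a b c)) A B C);
      [solve [auto with computable_db] | solve_computable | solve_computable | solve_computable]
  | |- computable (fun x => Nat.b2n (?f (@?A x) (@?B x))) =>
      apply (computable_bin (fun a b => Nat.b2n (f a b)) A B);
      [solve [auto with computable_db] | solve_computable | solve_computable]
  | |- computable (fun x => ?f (@?A x) (@?B x) (@?C x)) =>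
      apply (computable_tern f A B C);
      [solve [auto with computable_db] | solve_computable | solve_computable | solve_computable]
  | |- computable (fun x => ?f (@?A x) (@?B x)) =>
      apply (computable_bin f A B); [solve [auto with computable_db] | solve_computable | solve_computable]
  | |- computable (fun x => ?f (@?A x)) =>
      apply (computable_comp f A); [solve [auto with computable_db] | solve_computable]
  end.

(* Bounded universal and existential quantification, and bounded search
   ([bsearch n P] is the least [i < n] with [P i], or [n] if there is none). *)
Fixpoint ball (n : nat) (P : nat -> bool) : bool :=
  match n with 0 => true | S n => ball n P && P n end.
Fixpoint bex (n : nat) (P : nat -> bool) : bool :=
  match n with 0 => false | S n => bex n P || P n end.
Fixpoint bsearch (n : nat) (P : nat -> bool) : nat :=
  match n with
  | 0 => 0
  | S n => let r := bsearch n P in if r <? n then r else if P n then n else S n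
  end.

Lemma ball_spec n P : ball n P = true <-> forall i, i < n -> P i = true.
Proof.
  induction n as [|n IH]; simpl; [split; intros; auto; lia|].
  rewrite andb_true_iff, IH. split.
  - intros [H1 H2] i Hi. destruct (Nat.eq_dec i n); subst; auto. apply H1; lia.
  - intros H; split; auto.
Qed.

Lemma bex_spec n P : bex n P = true <-> exists i, i < n /\ P i = true.
Proof.
  induction n as [|n IH]; simpl; [split; [discriminate | intros [i [H _]]; lia]|].
  rewrite orb_true_iff, IH. split.
  - intros [[i [H1 H2]]|H]; [exists i | exists n]; auto.
  - intros [i [H1 H2]]. destruct (Nat.eq_dec i n); subst; auto. left; exists i; split; auto; lia.
Qed.

Lemma bsearch_spec n P : bsearch n P <= n /\ (bsearch n P < n -> P (bsearch n P) = true)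
  /\ forall i, i < bsearch n P -> P i = false.
Proof.
  induction n as [|n [IH1 [IH2 IH3]]]; simpl; [split; [lia | split; [lia | intros; lia]]|].
  destruct (Nat.ltb_spec (bsearch n P) n); [split; [lia | split]; auto|].
  assert (bsearch n P = n) by lia. destruct (P n) eqn:E; split; try lia; split.
  - auto.
  - intros i Hi. apply IH3; lia.
  - lia.
  - intros i Hi. destruct (Nat.eq_dec i n); subst; auto. apply IH3; lia.
Qed.

Lemma computable_ball N P : computable N -> computableb (fun p => P (p1 p) (p2 p)) ->
  computableb (fun x => ball (N x) (P x)).
Proof.
  intros HN HP.
  eapply computable_ext with (F := fun x => nrec 1 (fun i acc => acc * Nat.b2n (P x i)) (N x)).
  - solve_computable.
  - intro x. induction (N x) as [|n IH]; simpl; auto. rewrite IH.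
    now destruct (ball n (P x)), (P x n).
Qed.

Lemma computable_bex N P : computable N -> computableb (fun p => P (p1 p) (p2 p)) ->
  computableb (fun x => bex (N x) (P x)).
Proof.
  intros HN HP. eapply computable_ext
    with (F := fun x => nrec 0 (fun i acc => if acc =? 0 then Nat.b2n (P x i) else 1) (N x)).
  - solve_computable.
  - intro x. induction (N x) as [|n IH]; simpl; auto. rewrite IH.
    now destruct (bex n (P x)), (P x n).
Qed.

Lemma computable_bsearch N P : computable N -> computableb (fun p => P (p1 p) (p2 p)) ->
  computable (fun x => bsearch (N x) (P x)).
Proof.
  intros HN HP. eapply computable_ext
    with (F := fun x => nrec 0 (fun j r => if r <? j then r else if P x j then j else S j) (N x)).
  - solve_computable.
  - intro x. induction (N x) as [|n IH]; simpl; auto. now rewrite IH.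
Qed.

Ltac solve_computable_ext ::=
  lazymatch goal with
  | |- computable (fun x => Nat.b2n (ball (@?N x) (@?P x))) =>
      apply (computable_ball N P); solve_computable
  | |- computable (fun x => Nat.b2n (bex (@?N x) (@?P x))) =>
      apply (computable_bex N P); solve_computable
  | |- computable (fun x => bsearch (@?N x) (@?P x)) =>
      apply (computable_bsearch N P); solve_computable
  end.

(* Finite sequences are coded by nested pairs [<c0, <c1, ..., 0>>];
   [entry j c] reads off entry [j] and [enc f i m] codes [f i, ..., f (i+m-1)]. *)
Definition entry (j c : nat) : nat := p1 (nrec c (fun _ acc => p2 acc) j).
Fixpoint enc (f : nat -> nat) (i m : nat) : nat :=
  match m with 0 => 0 | S m => pair (f i) (enc f (S i) m) end.
(* The largest code of a length-[m] sequence with entries at most [M]. *)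
Definition max_code (M m : nat) : nat := nrec 0 (fun _ acc => pair M acc) m.

Lemma entry_S j c : entry (S j) c = entry j (p2 c).
Proof.
  unfold entry. f_equal. induction j as [|j IH]; [reflexivity|].
  simpl in *. now rewrite IH.
Qed.

Lemma entry_enc f j : forall i m, j < m -> entry j (enc f i m) = f (i + j).
Proof.
  induction j as [|j IH]; intros i [|m] H; try lia; simpl.
  - unfold entry; simpl. rewrite p1_pair. f_equal; lia.
  - rewrite entry_S. simpl. rewrite p2_pair, IH by lia. f_equal; lia.
Qed.

Lemma enc_bound f M m : forall i, (forall j, j < m -> f (i + j) <= M) ->
  enc f i m <= max_code M m.
Proof.
  induction m as [|m IH]; intros i H; simpl; [lia|]. apply pair_le.
  - specialize (H 0). rewrite Nat.add_0_r in H. apply H; lia.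
  - apply IH. intros j Hj. specialize (H (S j)). rewrite Nat.add_succ_r in H. apply H. lia.
Qed.

Lemma computable2_entry : computable2 entry.
Proof. unfold computable2, entry. solve_computable. Qed.
Lemma computable2_max_code : computable2 max_code.
Proof. unfold computable2, max_code. solve_computable. Qed.
#[local] Hint Resolve computable2_entry computable2_max_code : computable_db.

Definition card (G : graph) : nat := length (nodup Nat.eq_dec (verts G)).

Lemma iso_refl G : graph_iso G G.
Proof. exists (fun a => a). repeat split; eauto. Qed.

Lemma iso_trans G H K : graph_iso G H -> graph_iso H K -> graph_iso G K.
Proof.
  intros [f [F1 [F2 [F3 F4]]]] [g [G1 [G2 [G3 G4]]]].
  exists (fun a => g (f a)). split; [|split; [|split]]; auto.
  - intros c Hc. destruct (G3 c Hc) as [b [Hb <-]]. destruct (F3 b Hb) as [a [Ha <-]]. eauto.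
  - intros a b Ha Hb. rewrite G4; auto.
Qed.

(* The inverse isomorphism picks, for each vertex of [H], its preimage by [find]. *)
Lemma iso_sym G H : graph_iso G H -> graph_iso H G.
Proof.
  intros [f [F1 [F2 [F3 F4]]]].
  set (g := fun c => match find (fun a => f a =? c) (verts G) with Some a => a | None => 0 end).
  assert (Hg : forall c, in_graph H c -> in_graph G (g c) /\ f (g c) = c).
  { intros c Hc. unfold g. destruct (find (fun a => f a =? c) (verts G)) eqn:E.
    - apply find_some in E as [E1 E2]. apply Nat.eqb_eq in E2. auto.
    - destruct (F3 c Hc) as [a [Ha Hfa]]. eapply find_none in E; [|exact Ha].
      rewrite Hfa, Nat.eqb_refl in E. discriminate. }
  exists g. split; [|split; [|split]].
  - intros c Hc. apply Hg; auto.
  - intros c d Hc Hd E. rewrite <- (proj2 (Hg c Hc)), <- (proj2 (Hg d Hd)). now f_equal.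
  - intros a Ha. exists (f a). split; auto. destruct (Hg (f a) (F1 a Ha)). apply F2; auto.
  - intros c d Hc Hd. destruct (Hg c Hc), (Hg d Hd). rewrite <- F4 by auto. congruence.
Qed.

(* An isomorphism maps the distinct vertices of [G] injectively into [H]. *)
Lemma iso_card_le G H : graph_iso G H -> card G <= card H.
Proof.
  intros [f [F1 [F2 [F3 F4]]]]. unfold card. rewrite <- (length_map f).
  apply NoDup_incl_length.
  - assert (Hmap : forall l, NoDup l -> incl l (verts G) -> NoDup (map f l)).
    { induction l as [|a l IH]; intros ND I; simpl; [constructor|].
      inversion ND; subst. constructor.
      + intros [b [Hb1 Hb2]]%in_map_iff.
        assert (b = a) by (apply F2; auto; apply I; simpl; auto). subst. tauto.
      + apply IH; auto. intros x Hx; apply I; simpl; auto. }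
    apply Hmap; [apply NoDup_nodup|]. intros x Hx. now apply nodup_In in Hx.
  - intros c [a [<- Ha]]%in_map_iff. apply nodup_In, F1. now apply nodup_In in Ha.
Qed.

Lemma iso_card G H : graph_iso G H -> card G = card H.
Proof.
  intro I. pose proof (iso_card_le _ _ I). pose proof (iso_card_le _ _ (iso_sym _ _ I)). lia.
Qed.

(* A proper extension has a new vertex besides all the old ones. *)
Lemma proper_ext_card G G' : proper_ext G G' -> card G < card G'.
Proof.
  intros [[S1 S2] [a [Ha Hna]]]. unfold card.
  apply (NoDup_incl_length (l := a :: nodup Nat.eq_dec (verts G))).
  - constructor; [now rewrite nodup_In | apply NoDup_nodup].
  - intros x [<-|Hx]; apply nodup_In; auto. apply S1. now apply nodup_In in Hx.
Qed.

(* A code [e] describes a graph on the vertices [0, ..., k-1]: [a] and [b] are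
   adjacent iff they differ and entry [<a,b>] or entry [<b,a>] of [e] is
   nonzero.  This symmetric, irreflexive reading makes every code a graph. *)
Definition adj (e a b : nat) : bool :=
  negb (a =? b) && (negb (entry (pair a b) e =? 0) || negb (entry (pair b a) e =? 0)).
Definition coded_graph (k e : nat) : graph := mkGraph (seq 0 k) (adj e).
(* Every graph on [k] vertices has a code below [code_limit k] (Lemma [fug_has_code]). *)
Definition code_limit (k : nat) : nat := S (max_code 1 (pair k k)).

Lemma computable3_adj : computable3 (fun e a b => Nat.b2n (adj e a b)).
Proof. unfold computable3, adj. solve_computable. Qed.
Lemma computable_code_limit : computable code_limit.
Proof. unfold code_limit. solve_computable. Qed.
#[local] Hint Resolve computable3_adj computable_code_limit : computable_db.

Lemma in_coded_graph k e a : in_graph (coded_graph k e) a <-> a < k.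
Proof. unfold in_graph, coded_graph; simpl. rewrite in_seq. lia. Qed.

Lemma card_coded_graph k e : card (coded_graph k e) = k.
Proof.
  unfold card, coded_graph; simpl. rewrite nodup_fixed_point by apply seq_NoDup.
  apply length_seq.
Qed.

Lemma fug_coded_graph k e : 1 <= k -> is_fug (coded_graph k e).
Proof.
  intro Hk. split; [|split]; simpl.
  - destruct k; [lia | discriminate].
  - intros a _. unfold adj. now rewrite Nat.eqb_refl.
  - intros a b _ _. unfold adj. now rewrite Nat.eqb_sym, orb_comm.
Qed.

(* [q] codes the map [i |-> entry i q] on [0, ..., k-1]; [iso_code k e1 e2 q]
   checks that this map is an isomorphism of [coded_graph k e1] onto
   [coded_graph k e2].  Isomorphism of coded graphs is decidable because any
   isomorphism has a code at most [max_code k k]. *)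
Definition iso_code (k e1 e2 q : nat) : bool :=
  ball k (fun i => entry i q <? k) &&
  ball k (fun i => ball k (fun j => negb (entry i q =? entry j q) || (i =? j))) &&
  ball k (fun c => bex k (fun i => entry i q =? c)) &&
  ball k (fun a => ball k (fun b => Bool.eqb (adj e2 (entry a q) (entry b q)) (adj e1 a b))).
Definition iso_test (k e1 e2 : nat) : bool := bex (S (max_code k k)) (iso_code k e1 e2).

Lemma computable3_iso_test : computable3 (fun k e1 e2 => Nat.b2n (iso_test k e1 e2)).
Proof. unfold computable3, iso_test, iso_code. solve_computable. Qed.
#[local] Hint Resolve computable3_iso_test : computable_db.

Lemma iso_code_sound k e1 e2 q :
  iso_code k e1 e2 q = true -> graph_iso (coded_graph k e1) (coded_graph k e2).
Proof.
  unfold iso_code. rewrite !andb_true_iff, !ball_spec. intros [[[Hrange Hinj] Hsurj] Hadj].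
  exists (fun i => entry i q). split; [|split; [|split]].
  - intros a Ha%in_coded_graph. apply in_coded_graph, Nat.ltb_lt. auto.
  - intros a b Ha%in_coded_graph Hb%in_coded_graph E.
    specialize (Hinj a Ha). rewrite ball_spec in Hinj.
    specialize (Hinj b Hb).
    apply orb_true_iff in Hinj as [Hab|Hab]; [|now apply Nat.eqb_eq].
    now rewrite E, Nat.eqb_refl in Hab.
  - intros c Hc%in_coded_graph. destruct (proj1 (bex_spec _ _) (Hsurj c Hc)) as [i [Hi Ei]].
    exists i. split; [now apply in_coded_graph | now apply Nat.eqb_eq].
  - intros a b Ha%in_coded_graph Hb%in_coded_graph.
    specialize (Hadj a Ha). rewrite ball_spec in Hadj. now apply Bool.eqb_prop, Hadj.
Qed.

(* An isomorphism [f] is found by the test through its code [enc f 0 k]. *)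
Lemma iso_code_complete k e1 e2 :
  graph_iso (coded_graph k e1) (coded_graph k e2) ->
  exists q, q <= max_code k k /\ iso_code k e1 e2 q = true.
Proof.
  intros [f [F1 [F2 [F3 F4]]]].
  assert (Hq : forall i, i < k -> entry i (enc f 0 k) = f i) by (intros; now rewrite entry_enc).
  assert (Fk : forall i, i < k -> f i < k) by (intros i Hi; apply (in_coded_graph k e2), F1, in_coded_graph, Hi).
  exists (enc f 0 k). split.
  { apply enc_bound. intros j Hj. simpl. specialize (Fk j Hj). lia. }
  unfold iso_code. rewrite !andb_true_iff, !ball_spec. split; [split; [split|]|].
  - intros i Hi. rewrite Hq by auto. apply Nat.ltb_lt; auto.
  - intros i Hi. apply ball_spec. intros j Hj. rewrite !Hq by auto.
    destruct (Nat.eqb_spec (f i) (f j)) as [E|]; [|reflexivity].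
    apply orb_true_iff. right. apply Nat.eqb_eq, F2; auto; apply in_coded_graph; auto.
  - intros c Hc. apply bex_spec.
    destruct (F3 c) as [i [Hi%in_coded_graph Ei]]; [now apply in_coded_graph|].
    exists i. split; auto. rewrite Hq by auto. now apply Nat.eqb_eq.
  - intros a Ha. apply ball_spec. intros b Hb. rewrite !Hq by auto.
    apply eqb_true_iff, (F4 a b); apply in_coded_graph; auto.
Qed.

Lemma iso_test_spec k e1 e2 :
  iso_test k e1 e2 = true <-> graph_iso (coded_graph k e1) (coded_graph k e2).
Proof.
  unfold iso_test. rewrite bex_spec. split.
  - intros [q [_ Hq]]. exact (iso_code_sound _ _ _ _ Hq).
  - intros I. destruct (iso_code_complete _ _ _ I) as [q [Hq Hiso]]. exists q. split; auto. lia.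
Qed.

Definition distinct_verts (G : graph) : list nat := nodup Nat.eq_dec (verts G).
Definition vertex (G : graph) (i : nat) : nat := nth i (distinct_verts G) 0.
Fixpoint position (a : nat) (l : list nat) : nat :=
  match l with [] => 0 | x :: l => if x =? a then 0 else S (position a l) end.

Lemma position_spec a l : In a l -> position a l < length l /\ nth (position a l) l 0 = a.
Proof.
  induction l as [|x l IH]; simpl; [tauto|]. intros [<-|H]; [rewrite Nat.eqb_refl; split; auto; lia|].
  destruct (Nat.eqb_spec x a); [subst; split; auto; lia|]. destruct (IH H). split; auto; lia.
Qed.

Lemma position_nth l i : NoDup l -> i < length l -> position (nth i l 0) l = i.
Proof.
  revert i. induction l as [|x l IH]; simpl; intros i ND Hi; [lia|]. inversion ND; subst.
  destruct i as [|i]; [now rewrite Nat.eqb_refl|].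
  destruct (Nat.eqb_spec x (nth i l 0)); [subst; exfalso; apply H1, nth_In; lia|].
  rewrite IH; auto. lia.
Qed.

Lemma vertex_in G i : i < card G -> in_graph G (vertex G i).
Proof. intro Hi. apply (nodup_In Nat.eq_dec), nth_In. exact Hi. Qed.

Definition edge_code (G : graph) : nat :=
  enc (fun j => if edge G (vertex G (p1 j)) (vertex G (p2 j)) then 1 else 0) 0
      (pair (card G) (card G)).

Lemma edge_code_bound G : edge_code G < code_limit (card G).
Proof.
  apply Nat.lt_succ_r, enc_bound. intros j _. simpl. destruct (edge G _ _); lia.
Qed.

Lemma adj_edge_code G a b : is_fug G -> a < card G -> b < card G ->
  adj (edge_code G) a b = edge G (vertex G a) (vertex G b).
Proof.
  intros [_ [Hirr Hsym]] Ha Hb. unfold adj, edge_code.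
  rewrite !entry_enc by (apply pair_lt_square; auto). simpl. rewrite !p1_pair, !p2_pair.
  destruct (Nat.eqb_spec a b) as [<-|]; simpl.
  - now rewrite Hirr by (apply vertex_in; auto).
  - rewrite (Hsym (vertex G b)) by (apply vertex_in; auto).
    now destruct (edge G (vertex G a) (vertex G b)).
Qed.

Lemma fug_has_code G : is_fug G ->
  1 <= card G /\ exists e, e < code_limit (card G) /\ graph_iso G (coded_graph (card G) e).
Proof.
  intros HG. pose proof (NoDup_nodup Nat.eq_dec (verts G)) as ND.
  assert (HL : forall a, In a (distinct_verts G) <-> in_graph G a) by (intro; apply nodup_In).
  split.
  { destruct HG as [Hne _]. destruct (verts G) as [|a l] eqn:E; [congruence|].
    assert (Ha : In a (distinct_verts G)) by (apply HL; unfold in_graph; rewrite E; simpl; auto).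
    unfold card. fold (distinct_verts G). destruct (distinct_verts G); simpl in *; [tauto | lia]. }
  exists (edge_code G). split; [apply edge_code_bound|].
  exists (fun a => position a (distinct_verts G)). split; [|split; [|split]].
  - intros a Ha%HL. apply in_coded_graph, position_spec, Ha.
  - intros a b Ha%HL Hb%HL E.
    destruct (position_spec a _ Ha), (position_spec b _ Hb). congruence.
  - intros c Hc%in_coded_graph. exists (vertex G c). split; [now apply vertex_in|].
    now apply position_nth.
  - intros a b Ha%HL Hb%HL.
    destruct (position_spec a _ Ha) as [A1 A2], (position_spec b _ Hb) as [B1 B2].
    simpl. rewrite adj_edge_code by auto. unfold vertex. congruence.
Qed.

Definition canonical (k e : nat) : bool := ball e (fun e' => negb (iso_test k e' e)).

Lemma computable2_canonical : computable2 (fun k e => Nat.b2n (canonical k e)).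
Proof. unfold computable2, canonical. solve_computable. Qed.
#[local] Hint Resolve computable2_canonical : computable_db.

Lemma canonical_unique k e1 e2 : canonical k e1 = true -> canonical k e2 = true ->
  graph_iso (coded_graph k e1) (coded_graph k e2) -> e1 = e2.
Proof.
  unfold canonical. rewrite !ball_spec. intros C1 C2 I.
  destruct (Nat.lt_trichotomy e1 e2) as [L|[L|L]]; auto; exfalso.
  - specialize (C2 e1 L). apply iso_test_spec in I. now rewrite I in C2.
  - specialize (C1 e2 L). apply iso_sym, iso_test_spec in I. now rewrite I in C1.
Qed.

Lemma canonical_exists k e : exists e0, e0 <= e /\ canonical k e0 = true /\
  graph_iso (coded_graph k e) (coded_graph k e0).
Proof.
  set (P := fun e' => iso_test k e' e).
  destruct (bsearch_spec (S e) P) as [Hle [Hfound Hleast]].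
  assert (Pe : P e = true) by apply iso_test_spec, iso_refl.
  set (e0 := bsearch (S e) P) in *.
  assert (He0 : e0 <= e).
  { destruct (Nat.le_gt_cases e0 e) as [|L]; auto. now rewrite Hleast in Pe. }
  assert (P0 : graph_iso (coded_graph k e0) (coded_graph k e)) by (apply iso_test_spec, Hfound; lia).
  exists e0. repeat split; auto using iso_sym.
  unfold canonical. apply ball_spec. intros i Hi.
  destruct (iso_test k i e0) eqn:E; auto.
  apply iso_test_spec in E.
  assert (Pi : P i = true) by (apply iso_test_spec; eapply iso_trans; eauto).
  now rewrite (Hleast i Hi) in Pi.
Qed.

(* The enumeration runs through the states [<k, e>] with [e] a canonical code
   for size [k], in lexicographic order: by size first, then by code. *)
Definition valid (s : nat) : Prop :=
  1 <= p1 s /\ p2 s < code_limit (p1 s) /\ canonical (p1 s) (p2 s) = true.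
Definition lexlt (s t : nat) : Prop := p1 s < p1 t \/ (p1 s = p1 t /\ p2 s < p2 t).

Lemma lexlt_trichotomy s t : lexlt s t \/ s = t \/ lexlt t s.
Proof.
  unfold lexlt. destruct (Nat.lt_trichotomy (p1 s) (p1 t)) as [|[E|]]; auto.
  destruct (Nat.lt_trichotomy (p2 s) (p2 t)) as [|[E'|]]; auto.
  right; left. now rewrite <- (pair_p s), <- (pair_p t), E, E'.
Qed.

(* [bmin lo hi P]: the least [i] in [lo, hi) with [P i], or [hi]. *)
Definition bmin (lo hi : nat) (P : nat -> bool) : nat :=
  lo + bsearch (hi - lo) (fun i => P (lo + i)).

Lemma bmin_spec lo hi P : lo <= hi ->
  lo <= bmin lo hi P <= hi /\ (bmin lo hi P < hi -> P (bmin lo hi P) = true) /\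
  forall i, lo <= i < bmin lo hi P -> P i = false.
Proof.
  intro H. unfold bmin. destruct (bsearch_spec (hi - lo) (fun i => P (lo + i))) as [A [B C]].
  split; [lia|split].
  - intro. apply B. lia.
  - intros i Hi. replace i with (lo + (i - lo)) by lia. apply C. lia.
Qed.

(* The next valid state: the next canonical code of the same size, or the
   first code [0] (always canonical) of the next size. *)
Definition next_state (s : nat) : nat :=
  let e := bmin (S (p2 s)) (code_limit (p1 s)) (canonical (p1 s)) in
  if e <? code_limit (p1 s) then pair (p1 s) e else pair (S (p1 s)) 0.
Definition state (n : nat) : nat := nrec (pair 1 0) (fun _ s => next_state s) n.

Lemma computable_state : computable state.
Proof. unfold state, next_state, bmin. solve_computable. Qed.
#[local] Hint Resolve computable_state : computable_db.

Lemma next_state_spec s : valid s ->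
  valid (next_state s) /\ lexlt s (next_state s) /\
  forall t, lexlt s t -> lexlt t (next_state s) -> ~ valid t.
Proof.
  intros [Hk [He Hc]]. unfold next_state.
  destruct (bmin_spec (S (p2 s)) (code_limit (p1 s)) (canonical (p1 s)) He) as [B1 [B2 B3]].
  set (r := bmin _ _ _) in *.
  unfold lexlt, valid. destruct (Nat.ltb_spec r (code_limit (p1 s))) as [L|L];
    rewrite p1_pair, p2_pair; repeat split; auto; try lia.
  - intros t Lt1 Lt2 [_ [Ht Hct]]. assert (Et : p1 t = p1 s) by lia. rewrite Et in *.
    rewrite B3 in Hct; [discriminate | lia].
  - unfold code_limit. lia.
  - intros t Lt1 Lt2 [_ [Ht Hct]]. assert (Et : p1 t = p1 s) by lia. rewrite Et in *.
    rewrite B3 in Hct; [discriminate | lia].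
Qed.

Lemma state_valid n : valid (state n).
Proof.
  induction n as [|n IH]; [|exact (proj1 (next_state_spec _ IH))].
  unfold valid, state, code_limit; simpl. rewrite p1_pair, p2_pair. repeat split; lia.
Qed.

Lemma state_step n : lexlt (state n) (state (S n)).
Proof. exact (proj1 (proj2 (next_state_spec _ (state_valid n)))). Qed.

Lemma state_lexlt m n : m < n -> lexlt (state m) (state n).
Proof.
  induction 1 as [|n _ IH]; [apply state_step|].
  pose proof (state_step n). unfold lexlt in *. lia.
Qed.

(* The enumeration never returns to a smaller size ... *)
Lemma state_size_mono m n : m <= n -> p1 (state m) <= p1 (state n).
Proof.
  intro H. destruct (Nat.eq_dec m n) as [<-|]; auto.
  pose proof (state_lexlt m n). unfold lexlt in *. lia.
Qed.

Lemma state_inj m n : state m = state n -> m = n.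
Proof.
  intro E. destruct (Nat.lt_trichotomy m n) as [H|[H|H]]; auto;
    pose proof (state_lexlt _ _ H) as L; unfold lexlt in L; rewrite E in L; lia.
Qed.

(* ... and reaches every size: within a size the code strictly increases
   below [code_limit], so the size must eventually grow. *)
Lemma state_size_grows n : exists m, p1 (state n) < p1 (state m).
Proof.
  enough (H : forall d n, code_limit (p1 (state n)) - p2 (state n) <= d ->
                exists m, p1 (state n) < p1 (state m)) by (eapply H, le_n).
  induction d as [|d IH]; intros n' Hd; destruct (state_valid n') as [_ [Hlim _]]; [lia|].
  pose proof (state_step n') as Step. destruct (state_valid (S n')) as [_ [Hlim' _]].
  destruct Step as [L|[E L]]; [now exists (S n')|].
  destruct (IH (S n')) as [m Hm]; [rewrite <- E; lia|]. exists m. lia.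
Qed.

Lemma state_size_unbounded k : exists n, k <= p1 (state n).
Proof.
  induction k as [|k [n Hn]]; [exists 0; lia|].
  destruct (state_size_grows n) as [m Hm]. exists m. lia.
Qed.

(* Every valid state is enumerated, since [next_state] skips no valid state. *)
Lemma state_surj t : valid t -> exists n, state n = t.
Proof.
  intro Vt. destruct (state_size_unbounded (S (p1 t))) as [n Hn].
  assert (L : lexlt t (state n)) by (left; lia). clear Hn.
  induction n as [|n IH].
  - exfalso. destruct Vt as [Hk _]. unfold lexlt, state in L; simpl in L.
    rewrite p1_pair, p2_pair in L. lia.
  - destruct (lexlt_trichotomy t (state n)) as [L'|[E|L']]; auto; [now exists n|].
    exfalso. exact (proj2 (proj2 (next_state_spec _ (state_valid n))) t L' L Vt).
Qed.

Definition enum_graph (n : nat) : graph := coded_graph (p1 (state n)) (p2 (state n)).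

Lemma card_enum_graph n : card (enum_graph n) = p1 (state n).
Proof. apply card_coded_graph. Qed.

(* Isomorphic enumerated graphs have the same size and, by uniqueness of
   canonical codes, the same code; hence the same index. *)
Lemma enum_graph_friedberg : friedberg enum_graph.
Proof.
  intros m n I. apply state_inj.
  assert (Ek : p1 (state m) = p1 (state n)) by (rewrite <- !card_enum_graph; now apply iso_card).
  destruct (state_valid m) as [_ [_ Cm]], (state_valid n) as [_ [_ Cn]].
  unfold enum_graph in I. rewrite Ek in Cm, I.
  rewrite <- (pair_p (state m)), <- (pair_p (state n)), Ek.
  now rewrite (canonical_unique _ _ _ Cm Cn I).
Qed.

(* Every finite graph is isomorphic to an enumerated one: the one carrying
   the canonical code of its adjacency matrix. *)
Lemma enum_graph_complete G : is_fug G -> exists n, graph_iso G (enum_graph n).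
Proof.
  intro HG. destruct (fug_has_code G HG) as [Hk [e [He I]]].
  destruct (canonical_exists (card G) e) as [e0 [Le [Can I0]]].
  destruct (state_surj (pair (card G) e0)) as [n Hn].
  { unfold valid. rewrite p1_pair, p2_pair. repeat split; auto. lia. }
  exists n. unfold enum_graph. rewrite Hn, p1_pair, p2_pair. eapply iso_trans; eauto.
Qed.

(* The enumeration as a set of codes [<n, phi>]: [x] is accepted when it codes
   a literal over the vertices of [enum_graph n] that holds there. *)
Definition diagramb (x : nat) : bool :=
  let k := p1 (state (p1 x)) in
  let e := p2 (state (p1 x)) in
  let sign := p1 (p2 x) in
  let kind := p1 (p2 (p2 x)) in
  let a := p1 (p2 (p2 (p2 x))) in
  let b := p2 (p2 (p2 (p2 x))) in
  (sign <? 2) && (kind <? 2) && (a <? k) && (b <? k) &&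
  Bool.eqb (if kind =? 0 then a =? b else adj e a b) (sign =? 0).
Definition diagrams (x : nat) : Prop := diagramb x = true.

Lemma diagrams_ce : ce diagrams.
Proof. apply ce_decidable. unfold diagramb. solve_computable. Qed.

Lemma diagrams_shape x : diagrams x -> exists n l, x = pair n (code_lit l).
Proof.
  unfold diagrams, diagramb. rewrite !andb_true_iff. intros [[[[Hs Hk] _] _] _].
  apply Nat.ltb_lt in Hs, Hk.
  assert (Ex : x = pair (p1 x) (pair (p1 (p2 x)) (pair (p1 (p2 (p2 x)))
                     (pair (p1 (p2 (p2 (p2 x)))) (p2 (p2 (p2 (p2 x)))))))) by now rewrite !pair_p.
  revert Ex Hs Hk.
  generalize (p1 (p2 x)) (p1 (p2 (p2 x))) (p1 (p2 (p2 (p2 x)))) (p2 (p2 (p2 (p2 x)))).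
  intros sign kind a b -> Hs Hk. exists (p1 x).
  destruct sign as [|[|]], kind as [|[|]]; try lia.
  - now exists (LPos (AEq a b)).
  - now exists (LPos (AE a b)).
  - now exists (LNeg (AEq a b)).
  - now exists (LNeg (AE a b)).
Qed.

Lemma diagrams_spec n l : diagrams (pair n (code_lit l)) <-> in_diagram (enum_graph n) l.
Proof.
  unfold diagrams, diagramb.
  destruct l as [[a b|a b]|[a b|a b]]; simpl; repeat rewrite ?p1_pair, ?p2_pair;
    unfold in_diagram, holds_atom, enum_graph; rewrite !in_coded_graph; simpl;
    destruct (Nat.ltb_spec a (p1 (state n))), (Nat.ltb_spec b (p1 (state n))); simpl;
    try (split; [discriminate | lia]).
  all: destruct (Nat.eqb_spec a b), (adj (p2 (state n)) a b); simpl; intuition congruence.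
Qed.

(* The enumeration is ordered by size, and a proper extension is strictly
   larger, so its index is strictly larger. *)
Lemma enum_graph_index_lt G G' m n : graph_iso G (enum_graph m) -> graph_iso G' (enum_graph n) ->
  proper_ext G G' -> m < n.
Proof.
  intros Im In Hext. pose proof (proper_ext_card _ _ Hext) as C.
  rewrite (iso_card _ _ Im), (iso_card _ _ In), !card_enum_graph in C.
  destruct (Nat.lt_ge_cases m n) as [|Hnm]; auto.
  pose proof (state_size_mono _ _ Hnm). lia.
Qed.

Theorem lemma2p4 :
  exists (W : nat -> Prop) (Gs : nat -> graph),
    comp_enum_FUG W Gs /\ friedberg Gs /\
    (forall (G G' : graph) (m n : nat),
        is_fug G -> is_fug G' ->
        graph_iso G (Gs m) -> graph_iso G' (Gs n) ->
        proper_ext G G' -> m < n).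
Proof.
  exists diagrams, enum_graph. split; [|split].
  - split; [exact diagrams_ce|]. split; [exact diagrams_shape|]. split.
    + intro n. split; [apply fug_coded_graph, state_valid | apply diagrams_spec].
    + exact enum_graph_complete.
  - exact enum_graph_friedberg.
  - intros G G' m n _ _. apply enum_graph_index_lt.
Qed.
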